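(* There exist a set $A\subseteq\mathcal B$ and a functional $F\colon A\to\mathcal B$ such that $F$ is $A$-restricted polynomial-time computable but $F$ has no total polynomial-time computable extension $\tilde F\colon\mathcal B\to\mathcal B$.
   Context: $\Sigma=\{0,1\}$, $\mathcal B=(\Sigma^* )^{\Sigma^*}$ is the set of total string functions. An oracle Turing machine $M^?$ with oracle $\varphi\in\mathcal B$ replaces, upon entering its query state, the query-tape content $\mathbf b$ by $\varphi(\mathbf b)$ in one time step; $\operatorname{time}_{M^\varphi}(\mathbf a)$ is the number of steps on input $\mathbf a$. $M^?$ computes $F\colon A\to\mathcal B$ if $M^\varphi=F(\varphi)$ for all $\varphi\in A$. The size function is $|\varphi|(n)=\max\{|\varphi(\mathbf a)|:|\mathbf a|\le n\}$. Second-order polynomials are the smallest class of functions $\mathbb N^{\mathbb N}\times\mathbb N\to\mathbb N$ containing all $(l,n)\mapsto p(n)$ for polynomials $p$ with natural coefficients and closed under pointwise sum, pointwise product, and $P\mapsto P^+$, $P^+(l,n)=l(P(l,n))$. For $A\subseteq\mathcal B$, $F\colon A\to\mathcal B$ is $A$-restricted polynomial-time computable if some oracle Turing machine $M^?$ computes $F$ and there is a second-order polynomial $P$ with $\operatorname{time}_{M^\varphi}(\mathbf a)\le P(|\varphi|,|\mathbf a|)$ for all $\varphi\in A$ and $\mathbf a\in\Sigma^*$. A total functional is polynomial-time computable if this holds with $A=\mathcal B$. *)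

From mathcomp Require Import all_boot.
Set Implicit Arguments. Unset Strict Implicit. Unset Printing Implicit Defensive.

(* Sigma = {0,1} is bool; strings are seq bool; B = total string functions. *)
Definition str := seq bool.
Definition Bfun := str -> str.

Definition sizefun (phi : Bfun) (n : nat) : nat :=
  \max_(k < n.+1) \max_(t : k.-tuple bool) size (phi (val t)).

Inductive sopoly : Type :=
  | SPpoly of seq nat
  | SPadd of sopoly & sopoly
  | SPmul of sopoly & sopoly
  | SPlift of sopoly.

Fixpoint sop_eval (P : sopoly) (l : nat -> nat) (n : nat) : nat :=
  match P with
  | SPpoly cs => \sum_(i < size cs) nth 0 cs i * n ^ i
  | SPadd P Q => sop_eval P l n + sop_eval Q l n
  | SPmul P Q => sop_eval P l n * sop_eval Q l n
  | SPlift P => l (sop_eval P l n)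
  end.

(* Tape symbols: None = blank, Some b = the bit b.  Tapes are one-sided,
   represented by the finite list of their first cells (cells beyond are blank).
   The machine has k.+3 tapes: tape 0 = input tape, tape 1 = query tape,
   tape 2 = output tape, the others are work tapes. *)
Inductive move := MoveL | MoveR | Stay.

Record OTM := mkOTM {
  otm_k : nat;                 (* number of additional work tapes *)
  otm_q : nat;
  otm_start : 'I_otm_q;
  otm_halt : 'I_otm_q;
  otm_query : 'I_otm_q;
  otm_answer : 'I_otm_q;
  otm_delta : 'I_otm_q -> {ffun 'I_(otm_k.+3) -> option bool} ->
              'I_otm_q * ('I_(otm_k.+3) -> option bool) * ('I_(otm_k.+3) -> move)
}.

Definition in_tape (k : nat) : 'I_k.+3 := inord 0.
Definition query_tape (k : nat) : 'I_k.+3 := inord 1.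
Definition out_tape (k : nat) : 'I_k.+3 := inord 2.

Record config (M : OTM) := mkConfig {
  cf_state : 'I_(otm_q M);
  cf_tapes : 'I_((otm_k M).+3) -> seq (option bool);
  cf_heads : 'I_((otm_k M).+3) -> nat
}.

Fixpoint tape_word (t : seq (option bool)) : str :=
  match t with
  | Some b :: t' => b :: tape_word t'
  | _ => [::]
  end.

Definition do_move (m : move) (h : nat) : nat :=
  match m with MoveL => h.-1 | MoveR => h.+1 | Stay => h end.

Definition init_config (M : OTM) (a : str) : config M :=
  @mkConfig M (otm_start M)
    (fun i => if i == in_tape (otm_k M) then map Some a else [::])
    (fun _ => 0).

Definition step (M : OTM) (phi : Bfun) (c : config M) : config M :=
  if cf_state c == otm_halt M then c
  else if cf_state c == otm_query M then
    let qt := query_tape (otm_k M) in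
    @mkConfig M (otm_answer M)
      (fun i => if i == qt then map Some (phi (tape_word (cf_tapes c qt)))
                else cf_tapes c i)
      (fun i => if i == qt then 0 else cf_heads c i)
  else
    let: (q', w, m) :=
      otm_delta (cf_state c) [ffun i => nth None (cf_tapes c i) (cf_heads c i)] in
    @mkConfig M q'
      (fun i => set_nth None (cf_tapes c i) (cf_heads c i) (w i))
      (fun i => do_move (m i) (cf_heads c i)).

Definition run (M : OTM) (phi : Bfun) (a : str) (t : nat) : config M :=
  iter t (step phi) (init_config M a).

Definition halted (M : OTM) (c : config M) : Prop := cf_state c = otm_halt M.

Definition output (M : OTM) (c : config M) : str :=
  tape_word (cf_tapes c (out_tape (otm_k M))).

Definition otm_outputs (M : OTM) (phi : Bfun) (a y : str) : Prop :=
  exists t, halted (run M phi a t) /\ output (run M phi a t) = y.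

Definition time_le (M : OTM) (phi : Bfun) (a : str) (T : nat) : Prop :=
  exists2 t, t <= T & halted (run M phi a t).

Definition computes (A : Bfun -> Prop) (M : OTM) (F : {phi : Bfun | A phi} -> Bfun)
  : Prop :=
  forall (phi : {phi : Bfun | A phi}) (a : str), otm_outputs M (proj1_sig phi) a (F phi a).

Definition restricted_polytime (A : Bfun -> Prop) (F : {phi : Bfun | A phi} -> Bfun)
  : Prop :=
  exists (M : OTM) (P : sopoly), computes M F /\
    forall phi : Bfun, A phi -> forall a : str,
      time_le M phi a (sop_eval P (sizefun phi) (size a)).

Definition polytime (F : Bfun -> Bfun) : Prop :=
  @restricted_polytime (fun _ => True) (fun phi => F (proj1_sig phi)).

From mathcomp Require Import all_boot zify.

Set Implicit Arguments.
Unset Strict Implicit.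
Unset Printing Implicit Defensive.

(* The search functional F returns 1^j for the first j such that the
   (j+1)-st iterate of phi from the empty word starts with 1.  Its domain A
   consists of the phi for which this search needs at most |phi|(|phi|(0))
   steps, so on A it is computed in second-order polynomial time.
   A total extension computed in time P fails on the oracle counter s, which
   walks through the 2^s words 0w with |w| = s before answering 1, where s is
   so large that P(|counter s|, 0) < 2^s: the machine then leaves some word 1w
   with |w| = s unqueried, and redirecting that word to a string of length
   2 * 2^s + 2 moves the oracle into A without changing the run, although F
   now requires the output 1^(2^s), longer than the running time. *)

Definition query_word (M : OTM) (c : config M) : str :=
  tape_word (cf_tapes c (query_tape (otm_k M))).

Lemma out_tape_neq_in k : (out_tape k == in_tape k) = false.
Proof. by apply/negbTE/eqP => /(congr1 val); rewrite /= !inordK. Qed.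

Lemma out_tape_neq_query k : (out_tape k == query_tape k) = false.
Proof. by apply/negbTE/eqP => /(congr1 val); rewrite /= !inordK. Qed.

Lemma query_tape_neq_in k : (query_tape k == in_tape k) = false.
Proof. by apply/negbTE/eqP => /(congr1 val); rewrite /= !inordK. Qed.

Section Runs.
Variable M : OTM.
Implicit Types (phi psi : Bfun) (a y : str).

Lemma run_eq_oracle phi psi a t :
  (forall i, i < t -> phi (query_word (run M phi a i)) = psi (query_word (run M phi a i))) ->
  run M phi a t = run M psi a t.
Proof.
elim: t => [//|t IHt] eq_phi.
rewrite /run !iterS -/(run M phi a t) -/(run M psi a t).
rewrite -IHt => [|i lt_it]; last exact/eq_phi/ltnW.
by rewrite /step (eq_phi t (ltnSn t)).
Qed.

Lemma run_halted phi a t d :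
  halted (run M phi a t) -> run M phi a (d + t) = run M phi a t.
Proof.
move=> halt_t; elim: d => [//|d IHd].
by rewrite addSn /run iterS -/(run M phi a (d + t)) IHd /step halt_t eqxx.
Qed.

Lemma halted_run_eq phi a t1 t2 :
  halted (run M phi a t1) -> halted (run M phi a t2) ->
  run M phi a t1 = run M phi a t2.
Proof.
wlog le_t12 : t1 t2 / t1 <= t2 => [hwlog h1 h2|h1 _].
  by case: (leqP t1 t2) => [/hwlog->|/ltnW/hwlog->].
by rewrite -(subnK le_t12) run_halted.
Qed.

Lemma size_tape_word t : size (tape_word t) <= size t.
Proof. by elim: t => [|[[]|] t IHt] //=; apply: leq_trans (leqnSn _). Qed.

Lemma size_out_tape_run phi a t :
  size (cf_tapes (run M phi a t) (out_tape (otm_k M))) <= t /\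
  cf_heads (run M phi a t) (out_tape (otm_k M)) <= t.
Proof.
elim: t => [|t [size_t head_t]]; first by rewrite /run /= out_tape_neq_in.
rewrite /run iterS -/(run M phi a t) /step.
case: ifP => _; first by split; apply: leq_trans (leqnSn _).
case: ifP => _.
  by rewrite /= out_tape_neq_query; split; apply: leq_trans (leqnSn _).
case: (otm_delta _ _) => [[q' w] m] /=; split.
  by rewrite size_set_nth geq_max ltnS head_t (leq_trans size_t).
by case: (m _) => /=; lia.
Qed.

Lemma size_output_run phi a t : size (output (run M phi a t)) <= t.
Proof. exact: leq_trans (size_tape_word _) (size_out_tape_run phi a t).1. Qed.

Lemma size_outputs_leq phi a y t :
  otm_outputs M phi a y -> halted (run M phi a t) -> size y <= t.
Proof.
case=> t' [halt_t' <-] halt_t.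
by rewrite (halted_run_eq halt_t' halt_t) size_output_run.
Qed.

End Runs.

Definition oracle_upd (phi : Bfun) (h y : str) : Bfun :=
  fun x => if x == h then y else phi x.

Lemma run_oracle_upd M phi h y a t :
  (forall i, i < t -> query_word (run M phi a i) != h) ->
  run M (oracle_upd phi h y) a t = run M phi a t.
Proof.
move=> unqueried; symmetry; apply: run_eq_oracle => i /unqueried.
by rewrite /oracle_upd => /negbTE->.
Qed.

Lemma avoid_image (T : eqType) (f : nat -> T) (C : seq T) n :
  uniq C -> n < size C -> exists2 h, h \in C & forall i, i < n -> f i != h.
Proof.
move=> uniq_C lt_nC; case: (boolP (all (mem [seq f i | i <- iota 0 n]) C)).
  move=> /allP/(uniq_leq_size uniq_C).
  by rewrite size_map size_iota leqNgt lt_nC.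
case/allPn=> h hC hnQ; exists h => // i lt_in.
by apply: contraNneq hnQ => <-; apply: map_f; rewrite mem_iota.
Qed.

Lemma leq_sizefun (phi : Bfun) x n : size x <= n -> size (phi x) <= sizefun phi n.
Proof.
move=> le_xn; apply: leq_trans (leq_bigmax (Ordinal (le_xn : size x < n.+1))) => /=.
exact: (leq_bigmax (F := fun t : (size x).-tuple bool => size (phi (val t))) (in_tuple x)).
Qed.

Lemma sizefun_leq (phi : Bfun) m n : (forall x, size (phi x) <= m) -> sizefun phi n <= m.
Proof. by move=> le_phi; apply/bigmax_leqP => k _; apply/bigmax_leqP => t _. Qed.

Lemma sop_eval_mono P (l l' : nat -> nat) n :
  (forall x, l x <= l' x) -> {homo l' : x y / x <= y} ->
  sop_eval P l n <= sop_eval P l' n.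
Proof.
move=> le_ll' mono_l'; elim: P => [cs|P IHP Q IHQ|P IHP Q IHQ|P IHP] //=.
- exact: leq_add.
- exact: leq_mul.
- exact: leq_trans (le_ll' _) (mono_l' _ _ IHP).
Qed.

Lemma sop_eval_const P : exists B d, forall c, 0 < c ->
  sop_eval P (fun _ => c) 0 <= B * c ^ d.
Proof.
elim: P => [cs|P [B1 [d1 IHP]] Q [B2 [d2 IHQ]]|P [B1 [d1 IHP]] Q [B2 [d2 IHQ]]|P _].
- by exists (sop_eval (SPpoly cs) (fun _ => 0) 0), 0 => c _; rewrite muln1.
- exists (B1 + B2), (d1 + d2) => c c_gt0 /=; rewrite mulnDl.
  by apply: leq_add; [apply: leq_trans (IHP c c_gt0) _|apply: leq_trans (IHQ c c_gt0) _];
    rewrite leq_mul2l leq_pexp2l ?leq_addr ?leq_addl ?orbT.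
- exists (B1 * B2), (d1 + d2) => c c_gt0 /=; rewrite expnD mulnACA.
  exact: leq_mul (IHP c c_gt0) (IHQ c c_gt0).
- by exists 1, 1 => c _ /=; rewrite mul1n expn1.
Qed.

Lemma sq_leq_exp2 n : 4 <= n -> n * n <= 2 ^ n.
Proof.
elim: n => [//|n IHn]; rewrite leq_eqVlt => /orP[/eqP <- //|le_4n].
rewrite expnS; apply: leq_trans (_ : 2 * (n * n) <= _); first by rewrite ltnS in le_4n; nia.
by rewrite leq_mul2l IHn.
Qed.

Lemma poly_lt_exp2 B d : exists s, B * s.+1 ^ d < 2 ^ s.
Proof.
pose m := d + B + 4; exists (2 ^ m).-1.
rewrite prednK ?expn_gt0 // -expnM.
have lt_B : B * 2 ^ (m * d) < 2 ^ (B + m * d).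
  by rewrite expnD ltn_pmul2r ?expn_gt0 // ltn_expl.
apply: leq_trans lt_B _; rewrite leq_pexp2l // -ltnS prednK ?expn_gt0 //.
by have := @sq_leq_exp2 m (leq_addl _ _); rewrite /m; nia.
Qed.

(* For such phi, sizefun phi is bounded by the constant s + 1, so P is
   dominated by an ordinary polynomial in s. *)
Lemma sop_eval_lt_exp2 P : exists s, forall phi : Bfun,
  (forall x, size (phi x) <= s.+1) -> sop_eval P (sizefun phi) 0 < 2 ^ s.
Proof.
have [B [d le_P]] := sop_eval_const P; have [s lt_s] := poly_lt_exp2 B d.
exists s => phi le_phi; apply: leq_ltn_trans lt_s.
apply: leq_trans (le_P _ (ltn0Sn s)).
by apply: sop_eval_mono => // x; apply: sizefun_leq.
Qed.

Definition flag (phi : Bfun) (j : nat) : bool := head false (iter j.+1 phi [::]).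

Definition first_flag (phi : Bfun) (j : nat) : Prop :=
  flag phi j /\ forall i, i < j -> ~~ flag phi i.

Lemma first_flag_inj phi i j : first_flag phi i -> first_flag phi j -> i = j.
Proof.
move=> [flag_i lt_i] [flag_j lt_j].
by case: (ltngtP i j) => // [/lt_j|/lt_i]; rewrite ?flag_i ?flag_j.
Qed.

Definition st_query : 'I_3 := @Ordinal 3 0 isT.
Definition st_answer : 'I_3 := @Ordinal 3 1 isT.
Definition st_halt : 'I_3 := @Ordinal 3 2 isT.

(* st_query is both the start and the query state, so the transition function
   is consulted only in the answer state: halt if the answer starts with 1,
   otherwise append a 1 to the output and query the answer itself. *)
Definition search_delta (q : 'I_3) (r : {ffun 'I_3 -> option bool}) :
    'I_3 * ('I_3 -> option bool) * ('I_3 -> move) :=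
  if r (query_tape 0) == Some true then (st_halt, fun i => r i, fun _ => Stay)
  else (st_query, fun i => if i == out_tape 0 then Some true else r i,
        fun i => if i == out_tape 0 then MoveR else Stay).

Definition search_otm : OTM :=
  @mkOTM 0 3 st_query st_halt st_query st_answer search_delta.

Definition searching (c : config search_otm) (i : nat) (u : str) : Prop :=
  [/\ cf_state c = st_query, query_word c = u,
      cf_tapes c (out_tape 0) = nseq i (Some true) & cf_heads c (out_tape 0) = i].

Definition answered (c : config search_otm) (i : nat) (y : str) : Prop :=
  [/\ cf_state c = st_answer, cf_tapes c (query_tape 0) = map Some y,
      cf_heads c (query_tape 0) = 0, cf_tapes c (out_tape 0) = nseq i (Some true)
    & cf_heads c (out_tape 0) = i].

Lemma tape_word_map (y : str) : tape_word (map Some y) = y.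
Proof. by elim: y => //= b y ->. Qed.

Lemma set_nth_nseq_last (T : Type) (x0 x : T) j :
  set_nth x0 (nseq j x) j x = nseq j.+1 x.
Proof. by elim: j => //= j ->. Qed.

Lemma tape_word_set_nth_None j :
  tape_word (set_nth None (nseq j (Some true)) j None) = nseq j true.
Proof. by elim: j => //= j ->. Qed.

Section SearchMachine.
Variable phi : Bfun.

Lemma step_searching c i u : searching c i u -> answered (step phi c) i (phi u).
Proof.
case=> st_c <- out_c head_c; rewrite /step st_c.
rewrite (_ : st_query == st_halt = false) // (_ : st_query == st_query) //.
by split; rewrite /= ?eqxx ?out_tape_neq_query.
Qed.

Lemma step_answered c i y : answered c i y ->
  if head false y then halted (step phi c) /\ output (step phi c) = nseq i true
  else searching (step phi c) i.+1 y.
Proof.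
case=> st_c q_c qhead_c out_c head_c; rewrite /step st_c.
rewrite (_ : st_answer == st_halt = false) // (_ : st_answer == st_query = false) //.
rewrite [otm_delta _ _]/(search_delta _ _) /search_delta ffunE q_c qhead_c.
have q_out : (query_tape 0 == out_tape 0) = false by rewrite eq_sym out_tape_neq_query.
case: y q_c => [|[] y] q_c /=.
- split; rewrite /query_word //= ?eqxx ?q_out ?ffunE ?out_c ?head_c ?q_c ?qhead_c //.
  exact: set_nth_nseq_last.
- split => //; rewrite /output /= ffunE out_c head_c nth_default ?size_nseq //.
  exact: tape_word_set_nth_None.
- split; rewrite /query_word //= ?eqxx ?q_out ?ffunE ?out_c ?head_c ?q_c ?qhead_c //.
  + by rewrite /= tape_word_map.
  + exact: set_nth_nseq_last.
Qed.
End SearchMachine.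

Lemma run_search_otm phi a i : (forall j, j < i -> ~~ flag phi j) ->
  searching (run search_otm phi a (2 * i)) i (iter i phi [::]).
Proof.
elim: i => [_|i IHi not_flag].
  by split; rewrite /= ?out_tape_neq_in // /query_word /= query_tape_neq_in.
have := step_answered phi (step_searching phi (IHi (fun j lt_ji => not_flag j (ltnW lt_ji)))).
rewrite -iterS -/(flag phi i) (negbTE (not_flag i (ltnSn i))).
by rewrite mulnS add2n /run !iterS.
Qed.

Lemma search_otm_halts phi a j : first_flag phi j ->
  halted (run search_otm phi a (2 * j).+2) /\
  output (run search_otm phi a (2 * j).+2) = nseq j true.
Proof.
case=> flag_j not_flag.
have := step_answered phi (step_searching phi (run_search_otm a not_flag)).
by rewrite -iterS -/(flag phi j) flag_j.
Qed.

Definition search_dom (phi : Bfun) : Prop :=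
  exists j, first_flag phi j /\ (2 * j).+2 <= sizefun phi (sizefun phi 0).

Lemma search_dom_flag phi : search_dom phi -> exists j, flag phi j.
Proof. by case=> j [[flag_j _] _]; exists j. Qed.

Definition search_fun (phi : {phi | search_dom phi}) : Bfun :=
  fun _ => nseq (ex_minn (search_dom_flag (proj2_sig phi))) true.

Lemma search_funE phi (dom_phi : search_dom phi) j :
  first_flag phi j -> search_fun (exist _ phi dom_phi) = fun _ => nseq j true.
Proof.
move=> first_j; rewrite /search_fun /=; case: ex_minnP => m flag_m min_m.
suff -> : m = j by [].
apply: first_flag_inj (_ : first_flag phi m) first_j; split => // i.
by apply: contraTN => /min_m; rewrite leqNgt.
Qed.

Lemma search_fun_restricted_polytime : restricted_polytime search_fun.
Proof.
exists search_otm, (SPlift (SPlift (SPpoly [::]))); split.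
  case=> phi dom_phi a; have [j [first_j _]] := dom_phi.
  have [halt_j out_j] := search_otm_halts a first_j.
  by exists (2 * j).+2; rewrite (search_funE dom_phi first_j).
move=> phi [j [first_j le_j]] a; rewrite /= big_ord0.
by exists (2 * j).+2; last exact: (search_otm_halts a first_j).1.
Qed.

Definition words (s : nat) : seq str := [seq val t | t <- enum {: s.-tuple bool}].

Lemma size_words s : size (words s) = 2 ^ s.
Proof. by rewrite size_map -cardE card_tuple card_bool. Qed.

Lemma uniq_words s : uniq (words s).
Proof. by rewrite map_inj_uniq ?enum_uniq //; apply: val_inj. Qed.

Lemma mem_words s w : (w \in words s) = (size w == s).
Proof.
apply/mapP/eqP => [[t _ ->]|size_w]; first exact: size_tuple.
by exists (Tuple (introT eqP size_w)); rewrite ?mem_enum.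
Qed.

Lemma size_nth_words s i : size (nth [::] (words s) i) <= s.
Proof.
case: (ltnP i (size (words s))) => [lt_i|le_i]; last by rewrite nth_default.
by move: (mem_nth [::] lt_i); rewrite mem_words => /eqP->.
Qed.

Definition counter (s : nat) (x : str) : str :=
  match x with
  | [::] => false :: nth [::] (words s) 0
  | false :: w => let i := (index w (words s)).+1 in
                  if i < 2 ^ s then false :: nth [::] (words s) i else [:: true]
  | true :: _ => [::]
  end.

Lemma size_counter s x : size (counter s x) <= s.+1.
Proof.
by case: x => [|[] w] //=; [|case: ifP]; rewrite //= ltnS size_nth_words.
Qed.

Lemma iter_counter s j : j < 2 ^ s ->
  iter j.+1 (counter s) [::] = false :: nth [::] (words s) j.
Proof.
elim: j => [//|j IHj] lt_j1; have lt_j := ltnW lt_j1.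
by rewrite iterS IHj //= index_uniq ?uniq_words ?size_words // lt_j1.
Qed.

Lemma iter_counter_end s : iter (2 ^ s).+1 (counter s) [::] = [:: true].
Proof.
have lt_pred : (2 ^ s).-1 < 2 ^ s by rewrite ltn_predL expn_gt0.
rewrite -(ltn_predK lt_pred) iterS iter_counter //=.
by rewrite index_uniq ?uniq_words ?size_words // (ltn_predK lt_pred) ltnn.
Qed.

Lemma head_iter_counter s i : i <= 2 ^ s -> head false (iter i (counter s) [::]) = false.
Proof. by case: i => [//|i] lt_i; rewrite iter_counter. Qed.

Definition marked_words (s : nat) : seq str := [seq true :: w | w <- words s].

Lemma uniq_marked_words s : uniq (marked_words s).
Proof. by rewrite map_inj_uniq ?uniq_words // => x y []. Qed.

Lemma size_marked_words s : size (marked_words s) = 2 ^ s.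
Proof. by rewrite size_map size_words. Qed.

Definition planted (s : nat) (h : str) : Bfun :=
  oracle_upd (counter s) h (nseq (2 * 2 ^ s).+2 true).

Section Planted.
Variables (s : nat) (h : str).
Hypothesis h_marked : h \in marked_words s.

Lemma iter_planted i : i <= (2 ^ s).+1 ->
  iter i (planted s h) [::] = iter i (counter s) [::].
Proof.
have [w _ ->] := mapP h_marked.
elim: i => [//|i IHi] lt_i; rewrite !iterS IHi 1?ltnW // /planted /oracle_upd.
by case: eqP => // iter_i; move: (head_iter_counter lt_i); rewrite iter_i.
Qed.

Lemma first_flag_planted : first_flag (planted s h) (2 ^ s).
Proof.
split; first by rewrite /flag iter_planted // iter_counter_end.
by move=> i lt_i; rewrite /flag iter_planted ?head_iter_counter // ltnS ltnW.
Qed.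

Lemma search_dom_planted : search_dom (planted s h).
Proof.
have [w w_s def_h] := mapP h_marked.
have size_h : size h <= sizefun (planted s h) 0.
  have nth0_s : size (nth [::] (words s) 0) = s.
    by apply/eqP; rewrite -mem_words mem_nth // size_words expn_gt0.
  have size_w : size w = s by apply/eqP; rewrite -mem_words.
  have := leq_sizefun (planted s h) (leqnn (size [::])).
  by rewrite /planted /oracle_upd def_h /= nth0_s size_w.
exists (2 ^ s); split; first exact: first_flag_planted.
apply: leq_trans (leq_sizefun _ size_h).
by rewrite /planted /oracle_upd eqxx size_nseq.
Qed.
End Planted.

Theorem mainTheorem6 :
  exists (A : Bfun -> Prop) (F : {phi : Bfun | A phi} -> Bfun),
    restricted_polytime F /\
    ~ (exists Ft : Bfun -> Bfun,
          polytime Ft /\ forall (phi : Bfun) (h : A phi), Ft phi = F (exist _ phi h)).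
Proof.
exists search_dom, search_fun; split; first exact: search_fun_restricted_polytime.
case=> Ft [[M [P [computes_Ft time_Ft]]] ext_Ft].
have [s lt_P] := sop_eval_lt_exp2 P.
have [t le_t halt_t] := time_Ft (counter s) I [::].
have lt_t : t < 2 ^ s := leq_ltn_trans le_t (lt_P _ (size_counter s)).
have lt_t_marked : t < size (marked_words s) by rewrite size_marked_words.
have [h h_marked unqueried] :=
  avoid_image (fun i => query_word (run M (counter s) [::] i)) (uniq_marked_words s) lt_t_marked.
have halt_h : halted (run M (planted s h) [::] t) by rewrite run_oracle_upd.
have := size_outputs_leq (computes_Ft (exist _ (planted s h) I) [::]) halt_h.
rewrite /= (ext_Ft _ (search_dom_planted h_marked)).
rewrite (search_funE _ (first_flag_planted h_marked)) size_nseq.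
by rewrite leqNgt lt_t.
Qed.
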